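(* For $n=0,1,2,\ldots$ let $\bar H^{(2)}_n=\sum_{0<j\leqslant n}\frac{1}{(2j-1)^2}$. For every real $x$ with $0\leqslant x<2$, $$\sum_{k=1}^\infty\binom{2k}k\bar H_k^{(2)}\left(\frac x4\right)^{2k}=\frac{\arcsin^2(x/2)}{\sqrt{4-x^2}}.$$ In particular, $$\sum_{k=1}^\infty\binom{2k}k\frac{\bar H_k^{(2)}}{16^k}=\frac{\pi^2}{36\sqrt3},\qquad \sum_{k=1}^\infty\binom{2k}k\frac{\bar H_k^{(2)}}{8^k}=\frac{\pi^2}{16\sqrt2},\qquad \sum_{k=1}^\infty\binom{2k}k\frac{3^k\bar H_k^{(2)}}{16^k}=\frac{\pi^2}9.$$ *)

From Stdlib Require Export Reals.
Open Scope R_scope.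

Fixpoint Hbar2 (n : nat) : R :=
  match n with
  | O => 0
  | S m => Hbar2 m + 1 / (2 * INR (S m) - 1) ^ 2
  end.

Definition term (x : R) (k : nat) : R :=
  C (2 * k) k * Hbar2 k * (x / 4) ^ (2 * k).

From Stdlib Require Import Reals Lra Lia.
From Coquelicot Require Import Coquelicot.
(* Imported after Coquelicot so that [C] is the binomial coefficient, not Coquelicot's complex numbers. *)
From Stdlib Require Import Binomial.
Open Scope R_scope.

(* The power series B, S and A with coefficients cbin k = C(2k,k)/4^k,
   asin_coef k = cbin k / (2k+1) and asin_sq_coef k = cbin k * Hbar2 k have
   bounded coefficients, hence radius at least 1, and the recurrences of their
   coefficients say that
     2 (1 - u) B' = B,   B = S + 2 u S',   S = 2 (1 - u) A' - A.
   Solving these in turn, each time by comparing derivatives on (-1, 1) and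
   values at 0, gives sqrt(1 - u) B(u) = 1, then t S(t^2) = asin t, and finally
   sqrt(1 - t^2) A(t^2) = asin^2 t / 2.  The series of the theorem is A(x^2/4)
   with its vanishing constant term dropped; the special values are the cases
   t = sin(pi/6), sin(pi/4), sin(pi/3). *)

Lemma Rpow_div_distr (a b : R) (k : nat) : (a / b) ^ k = a ^ k / b ^ k.
Proof. unfold Rdiv. now rewrite Rpow_mult_distr, pow_inv. Qed.

Lemma is_series_ext_eq (a b : nat -> R) (l l' : R) :
  (forall n, a n = b n) -> l = l' -> is_series a l -> is_series b l'.
Proof. intros Hab <-. now apply is_series_ext. Qed.

Lemma eq_of_same_derive (f g df dg : R -> R) (a b c t : R) :
  a < c < b -> a < t < b ->
  (forall x, a < x < b -> is_derive f x (df x)) ->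
  (forall x, a < x < b -> is_derive g x (dg x)) ->
  (forall x, a < x < b -> df x = dg x) ->
  f c = g c -> f t = g t.
Proof.
  intros Hc Ht Hf Hg Hfg Hfgc.
  assert (Hcont : forall (h dh : R -> R) y, (forall x, a < x < b -> is_derive h x (dh x)) ->
                  a < y < b -> continuity_pt h y).
  { intros h dh y Hh Hy. apply continuity_pt_filterlim, (@ex_derive_continuous R_AbsRing R_NormedModule).
    exists (dh y). now apply Hh. }
  pose proof (Rmin_l c t). pose proof (Rmin_r c t).
  pose proof (Rmax_l c t). pose proof (Rmax_r c t).
  assert (Hlo : a < Rmin c t < b) by (apply Rmin_case; lra).
  assert (Hhi : a < Rmax c t < b) by (apply Rmax_case; lra).
  destruct (fn_eq_Derive_eq f g (Rmin c t) (Rmax c t)) as [K HK].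
  1-2: apply (Hcont f df); [exact Hf | lra].
  1-2: apply (Hcont g dg); [exact Hg | lra].
  - intros x Hx. exists (df x). apply Hf; lra.
  - intros x Hx. exists (dg x). apply Hg; lra.
  - intros x Hx. rewrite (is_derive_unique f x (df x)), (is_derive_unique g x (dg x)).
    + apply Hfg; lra.
    + apply Hg; lra.
    + apply Hf; lra.
  - rewrite (HK t) by lra. rewrite (HK c) in Hfgc by lra. lra.
Qed.

Section BoundedCoefficients.

Variables (a : nat -> R) (M : R).
Hypothesis a_bounded : forall n, Rabs (a n) <= M.

Lemma CV_radius_ge_1 : Rbar_le 1 (CV_radius a).
Proof.
  apply (proj1 (CV_radius_bounded a)). exists M. intro n.
  now rewrite pow1, Rmult_1_r.
Qed.

Variable x : R.
Hypothesis x_lt_1 : Rabs x < 1.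

Lemma Rabs_lt_CV_radius : Rbar_lt (Rabs x) (CV_radius a).
Proof. eapply Rbar_lt_le_trans; [|exact CV_radius_ge_1]; exact x_lt_1. Qed.

Lemma is_derive_PSeries_bounded : is_derive (PSeries a) x (PSeries (PS_derive a) x).
Proof. exact (is_derive_PSeries a x Rabs_lt_CV_radius). Qed.

Lemma PSeries_first_order (p0 p1 q1 : R) :
  PSeries (fun n => p0 * a n + p1 * PS_derive a n + q1 * PS_incr_1 (PS_derive a) n) x
  = p0 * PSeries a x + (p1 + q1 * x) * PSeries (PS_derive a) x.
Proof.
  assert (Hda : Rbar_lt (Rabs x) (CV_radius (PS_derive a)))
    by (rewrite CV_radius_derive; exact Rabs_lt_CV_radius).
  assert (Hida : Rbar_lt (Rabs x) (CV_radius (PS_incr_1 (PS_derive a))))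
    by (rewrite CV_radius_incr_1; exact Hda).
  apply is_pseries_unique.
  pose proof (PSeries_correct _ _ (CV_radius_inside _ _ Rabs_lt_CV_radius)) as Ha.
  pose proof (PSeries_correct _ _ (CV_radius_inside _ _ Hda)) as Hd.
  pose proof (PSeries_correct _ _ (CV_radius_inside _ _ Hida)) as Hid.
  rewrite PSeries_incr_1 in Hid.
  unfold is_pseries in *.
  pose proof (is_series_plus _ _ _ _
    (is_series_plus _ _ _ _ (is_series_scal_l p0 _ _ Ha) (is_series_scal_l p1 _ _ Hd))
    (is_series_scal_l q1 _ _ Hid)) as H.
  replace (p0 * PSeries a x + (p1 + q1 * x) * PSeries (PS_derive a) x)
    with (plus (plus (scal p0 (PSeries a x)) (scal p1 (PSeries (PS_derive a) x)))
               (scal q1 (x * PSeries (PS_derive a) x)))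
    by (cbn; unfold mult; cbn; ring).
  eapply is_series_ext; [|exact H].
  intro n. unfold scal, plus; simpl. unfold mult; simpl. rewrite !pow_n_pow. ring.
Qed.

End BoundedCoefficients.

Definition cbin (k : nat) : R := C (2 * k) k / 4 ^ k.
Definition asin_coef (k : nat) : R := cbin k / (2 * INR k + 1).
Definition asin_sq_coef (k : nat) : R := cbin k * Hbar2 k.

Lemma cbin_0 : cbin 0 = 1.
Proof. unfold cbin, C. simpl. field. Qed.

Lemma cbin_S k : cbin (S k) = cbin k * (2 * INR k + 1) / (2 * INR k + 2).
Proof.
  unfold cbin, C.
  replace (2 * S k - S k)%nat with (S k) by lia.
  replace (2 * k - k)%nat with k by lia.
  replace (2 * S k)%nat with (S (S (2 * k))) by lia.
  rewrite !fact_simpl, !mult_INR, !S_INR, mult_INR. simpl (INR 2). simpl pow.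
  pose proof (INR_fact_neq_0 k). pose proof (INR_fact_neq_0 (2 * k)).
  pose proof (pos_INR k). assert (4 ^ k <> 0) by (apply pow_nonzero; lra).
  field. repeat split; auto; lra.
Qed.

Lemma cbin_bounds k : 0 < cbin k <= 1.
Proof.
  induction k as [|k IH]; [rewrite cbin_0; lra|].
  rewrite cbin_S. pose proof (pos_INR k).
  split; [apply Rdiv_lt_0_compat; nra|].
  apply Rmult_le_reg_r with (2 * INR k + 2); [lra|].
  unfold Rdiv. rewrite Rmult_assoc, Rinv_l by lra. nra.
Qed.

Lemma Hbar2_bounds k : 0 <= Hbar2 k <= 2 - 2 / (2 * INR k + 1).
Proof.
  induction k as [|k IH]; [simpl; lra|].
  change (Hbar2 (S k)) with (Hbar2 k + 1 / (2 * INR (S k) - 1) ^ 2).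
  rewrite S_INR. pose proof (pos_INR k).
  replace (2 * (INR k + 1) - 1) with (2 * INR k + 1) by ring.
  replace (2 * (INR k + 1) + 1) with (2 * INR k + 3) by ring.
  assert (0 < 1 / (2 * INR k + 1) ^ 2) by (apply Rdiv_lt_0_compat; [lra|apply pow_lt; lra]).
  assert (Htel : 2 / (2 * INR k + 1) - (1 / (2 * INR k + 1) ^ 2 + 2 / (2 * INR k + 3))
                 = (6 * INR k + 1) / ((2 * INR k + 1) ^ 2 * (2 * INR k + 3)))
    by (field; lra).
  assert (0 < (6 * INR k + 1) / ((2 * INR k + 1) ^ 2 * (2 * INR k + 3))).
  { apply Rdiv_lt_0_compat; [lra|]. apply Rmult_lt_0_compat; [apply pow_lt|]; lra. }
  lra.
Qed.

Lemma cbin_abs_le k : Rabs (cbin k) <= 1.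
Proof. pose proof (cbin_bounds k). rewrite Rabs_pos_eq; lra. Qed.

Lemma asin_coef_abs_le k : Rabs (asin_coef k) <= 1.
Proof.
  pose proof (cbin_bounds k). pose proof (pos_INR k). unfold asin_coef.
  rewrite Rabs_pos_eq by (apply Rlt_le, Rdiv_lt_0_compat; lra).
  apply Rmult_le_reg_r with (2 * INR k + 1); [lra|].
  unfold Rdiv. rewrite Rmult_assoc, Rinv_l by lra. nra.
Qed.

Lemma asin_sq_coef_abs_le k : Rabs (asin_sq_coef k) <= 2.
Proof.
  pose proof (cbin_bounds k). pose proof (Hbar2_bounds k). pose proof (pos_INR k).
  assert (0 <= 2 / (2 * INR k + 1)) by (apply Rlt_le, Rdiv_lt_0_compat; lra).
  unfold asin_sq_coef. rewrite Rabs_pos_eq by nra. nra.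
Qed.

Lemma cbin_first_order n :
  0 * cbin n + 1 * PS_derive cbin n + (-1) * PS_incr_1 (PS_derive cbin) n = / 2 * cbin n.
Proof.
  unfold PS_derive, PS_incr_1. destruct n as [|m].
  - rewrite cbin_S, cbin_0. unfold zero. simpl. field.
  - rewrite (cbin_S (S m)), !S_INR. pose proof (pos_INR m). field. lra.
Qed.

Lemma asin_coef_first_order n :
  1 * asin_coef n + 0 * PS_derive asin_coef n + 2 * PS_incr_1 (PS_derive asin_coef) n
  = cbin n.
Proof.
  unfold PS_derive, PS_incr_1, asin_coef. destruct n as [|m].
  - unfold zero. simpl. field.
  - rewrite !S_INR. pose proof (pos_INR m). field. lra.
Qed.

Lemma asin_sq_coef_first_order n :
  (-1) * asin_sq_coef n + 2 * PS_derive asin_sq_coef n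
    + (-2) * PS_incr_1 (PS_derive asin_sq_coef) n
  = asin_coef n.
Proof.
  unfold PS_derive, PS_incr_1, asin_coef, asin_sq_coef. destruct n as [|m].
  - rewrite cbin_S, cbin_0. unfold zero. simpl. field.
  - rewrite (cbin_S (S m)).
    change (Hbar2 (S (S m))) with (Hbar2 (S m) + 1 / (2 * INR (S (S m)) - 1) ^ 2).
    rewrite !S_INR. pose proof (pos_INR m). field. lra.
Qed.

Lemma PSeries_cbin_first_order x : Rabs x < 1 ->
  (1 - x) * PSeries (PS_derive cbin) x = / 2 * PSeries cbin x.
Proof.
  intro Hx. transitivity (PSeries (fun n => / 2 * cbin n) x); [|exact (PSeries_scal _ _ _)].
  rewrite <- (PSeries_ext _ _ x cbin_first_order).
  rewrite (PSeries_first_order _ _ cbin_abs_le _ Hx). ring.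
Qed.

Lemma PSeries_asin_coef_first_order x : Rabs x < 1 ->
  PSeries asin_coef x + 2 * x * PSeries (PS_derive asin_coef) x = PSeries cbin x.
Proof.
  intro Hx. rewrite <- (PSeries_ext _ _ x asin_coef_first_order).
  rewrite (PSeries_first_order _ _ asin_coef_abs_le _ Hx). ring.
Qed.

Lemma PSeries_asin_sq_coef_first_order x : Rabs x < 1 ->
  2 * (1 - x) * PSeries (PS_derive asin_sq_coef) x - PSeries asin_sq_coef x
  = PSeries asin_coef x.
Proof.
  intro Hx. rewrite <- (PSeries_ext _ _ x asin_sq_coef_first_order).
  rewrite (PSeries_first_order _ _ asin_sq_coef_abs_le _ Hx). ring.
Qed.

Lemma is_derive_asin x : -1 < x < 1 -> is_derive asin x (1 / sqrt (1 - x ^ 2)).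
Proof.
  intro Hx. apply is_derive_Reals, (derive_pt_eq_1 _ _ _ (derivable_pt_asin x Hx)).
  rewrite derive_pt_asin. unfold Rsqr. simpl. now rewrite Rmult_1_r.
Qed.

Lemma is_derive_comp_sq (f : R -> R) x d :
  is_derive f (x ^ 2) d -> is_derive (fun t => f (t ^ 2)) x (2 * x * d).
Proof.
  intro H. apply (is_derive_comp f (fun t => t ^ 2)); [exact H|].
  auto_derive; [exact I | ring].
Qed.

Lemma is_derive_Rmult (f g : R -> R) x df dg :
  is_derive f x df -> is_derive g x dg ->
  is_derive (fun t => f t * g t) x (df * g x + f x * dg).
Proof. intros Hf Hg. exact (is_derive_mult f g x df dg Hf Hg Rmult_comm). Qed.

Lemma Rabs_sq_lt_1 t : -1 < t < 1 -> Rabs (t ^ 2) < 1.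
Proof. intro Ht. rewrite Rabs_pos_eq; simpl; nra. Qed.

Lemma sqrt_one_minus_PSeries_cbin u : Rabs u < 1 -> sqrt (1 - u) * PSeries cbin u = 1.
Proof.
  intro Hu. apply Rabs_def2 in Hu.
  apply (eq_of_same_derive (fun u => sqrt (1 - u) * PSeries cbin u) (fun _ => 1)
    (fun x => -1 / (2 * sqrt (1 - x)) * PSeries cbin x
              + sqrt (1 - x) * PSeries (PS_derive cbin) x)
    (fun _ => 0) (-1) 1 0 u); try lra.
  - intros x Hx. apply (is_derive_Rmult (fun x => sqrt (1 - x)) (PSeries cbin)).
    + apply (is_derive_sqrt (fun x => 1 - x)); [auto_derive; [exact I | ring] | simpl; lra].
    + apply (is_derive_PSeries_bounded _ _ cbin_abs_le). apply Rabs_def1; lra.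
  - intros x _. exact (@is_derive_const R_AbsRing R_NormedModule 1 x).
  - intros x Hx.
    assert (Hs : 0 < sqrt (1 - x)) by (apply sqrt_lt_R0; lra).
    assert (Hss : sqrt (1 - x) * sqrt (1 - x) = 1 - x) by (apply sqrt_sqrt; lra).
    replace (PSeries cbin x) with (2 * (sqrt (1 - x) * sqrt (1 - x)) * PSeries (PS_derive cbin) x).
    + field. lra.
    + rewrite Hss, Rmult_assoc, PSeries_cbin_first_order by (apply Rabs_def1; lra). field.
  - rewrite PSeries_0, cbin_0, Rminus_0_r, sqrt_1. ring.
Qed.

Lemma asin_PSeries t : -1 < t < 1 -> t * PSeries asin_coef (t ^ 2) = asin t.
Proof.
  intro Ht.
  apply (eq_of_same_derive (fun t => t * PSeries asin_coef (t ^ 2)) asin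
    (fun x => PSeries asin_coef (x ^ 2) + x * (2 * x * PSeries (PS_derive asin_coef) (x ^ 2)))
    (fun x => 1 / sqrt (1 - x ^ 2)) (-1) 1 0 t); try lra.
  - intros x Hx. rewrite <- (Rmult_1_l (PSeries asin_coef (x ^ 2))) at 1.
    apply (is_derive_Rmult (fun t => t) (fun t => PSeries asin_coef (t ^ 2))).
    + apply (@is_derive_id R_AbsRing).
    + apply is_derive_comp_sq, (is_derive_PSeries_bounded _ _ asin_coef_abs_le).
      now apply Rabs_sq_lt_1.
  - exact is_derive_asin.
  - intros x Hx.
    pose proof (Rabs_sq_lt_1 x Hx) as Hx2.
    assert (Hs : 0 < sqrt (1 - x ^ 2)) by (apply sqrt_lt_R0; simpl; nra).
    transitivity (PSeries cbin (x ^ 2)).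
    + rewrite <- PSeries_asin_coef_first_order by exact Hx2. ring.
    + apply (Rmult_eq_reg_l (sqrt (1 - x ^ 2))); [|lra].
      rewrite sqrt_one_minus_PSeries_cbin by exact Hx2. field. lra.
  - cbv beta. rewrite asin_0. ring.
Qed.

Lemma asin_sq_PSeries t : -1 < t < 1 ->
  sqrt (1 - t ^ 2) * PSeries asin_sq_coef (t ^ 2) = asin t ^ 2 / 2.
Proof.
  intro Ht. replace (asin t ^ 2 / 2) with (/ 2 * asin t ^ 2) by field.
  apply (eq_of_same_derive
    (fun t => sqrt (1 - t ^ 2) * PSeries asin_sq_coef (t ^ 2)) (fun t => / 2 * asin t ^ 2)
    (fun x => (-2 * x) / (2 * sqrt (1 - x ^ 2)) * PSeries asin_sq_coef (x ^ 2)
              + sqrt (1 - x ^ 2) * (2 * x * PSeries (PS_derive asin_sq_coef) (x ^ 2)))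
    (fun x => asin x / sqrt (1 - x ^ 2)) (-1) 1 0 t); try lra.
  - intros x Hx.
    apply (is_derive_Rmult (fun t => sqrt (1 - t ^ 2)) (fun t => PSeries asin_sq_coef (t ^ 2))).
    + apply (is_derive_sqrt (fun x => 1 - x ^ 2)); [auto_derive; [exact I | ring] | simpl; nra].
    + apply is_derive_comp_sq, (is_derive_PSeries_bounded _ _ asin_sq_coef_abs_le).
      now apply Rabs_sq_lt_1.
  - intros x Hx.
    assert (Hs : 0 < sqrt (1 - x ^ 2)) by (apply sqrt_lt_R0; simpl; nra).
    replace (asin x / sqrt (1 - x ^ 2))
      with (/ 2 * (INR 2 * (1 / sqrt (1 - x ^ 2)) * asin x ^ Nat.pred 2))
      by (simpl INR; simpl Nat.pred; field; lra).
    apply (is_derive_scal (fun t => asin t ^ 2)), (is_derive_pow asin 2), is_derive_asin, Hx.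
  - intros x Hx.
    pose proof (Rabs_sq_lt_1 x Hx) as Hx2.
    assert (Hs : 0 < sqrt (1 - x ^ 2)) by (apply sqrt_lt_R0; simpl; nra).
    assert (Hss : sqrt (1 - x ^ 2) * sqrt (1 - x ^ 2) = 1 - x ^ 2) by (apply sqrt_sqrt; simpl; nra).
    rewrite <- (asin_PSeries x Hx), <- (PSeries_asin_sq_coef_first_order _ Hx2).
    replace (2 * (1 - x ^ 2)) with (2 * (sqrt (1 - x ^ 2) * sqrt (1 - x ^ 2))) by now rewrite Hss.
    field. lra.
  - cbv beta. rewrite asin_0, pow_i, PSeries_0 by lia. unfold asin_sq_coef. simpl. ring.
Qed.

Lemma is_series_asin_sq t : -1 < t < 1 ->
  is_series (fun n => asin_sq_coef (S n) * (t ^ 2) ^ S n) (asin t ^ 2 / (2 * sqrt (1 - t ^ 2))).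
Proof.
  intro Ht. pose proof (Rabs_sq_lt_1 t Ht) as Ht2.
  assert (Hs : 0 < sqrt (1 - t ^ 2)) by (apply sqrt_lt_R0; simpl; nra).
  replace (asin t ^ 2 / (2 * sqrt (1 - t ^ 2))) with (PSeries asin_sq_coef (t ^ 2))
    by (apply (Rmult_eq_reg_l (sqrt (1 - t ^ 2))); [|lra];
        rewrite asin_sq_PSeries by exact Ht; field; lra).
  apply (is_series_incr_1 (fun n => asin_sq_coef n * (t ^ 2) ^ n)).
  cbv beta. replace (asin_sq_coef 0) with 0 by (unfold asin_sq_coef; simpl; ring).
  rewrite Rmult_0_l. change (plus ?l 0) with (l + 0). rewrite Rplus_0_r.
  eapply is_series_ext;
    [|exact (PSeries_correct _ _ (CV_radius_inside _ _ (Rabs_lt_CV_radius _ _ asin_sq_coef_abs_le _ Ht2)))].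
  intro n. unfold scal; simpl. unfold mult; simpl. rewrite pow_n_pow. ring.
Qed.

Lemma term_eq_asin_sq_coef x k : term x k = asin_sq_coef k * ((x / 2) ^ 2) ^ k.
Proof.
  unfold term, asin_sq_coef, cbin.
  rewrite pow_mult. replace ((x / 2) ^ 2) with (4 * (x / 4) ^ 2) by field.
  rewrite Rpow_mult_distr. field. apply pow_nonzero. lra.
Qed.

Lemma is_series_term x : -2 < x < 2 ->
  is_series (fun n => term x (S n)) (asin (x / 2) ^ 2 / sqrt (4 - x ^ 2)).
Proof.
  intro Hx.
  refine (is_series_ext_eq _ _ _ _ _ _ (is_series_asin_sq (x / 2) _)).
  - intro n. symmetry. apply term_eq_asin_sq_coef.
  - replace (4 - x ^ 2) with (2 ^ 2 * (1 - (x / 2) ^ 2)) by field.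
    now rewrite sqrt_mult, sqrt_pow2 by (simpl; nra).
  - lra.
Qed.

Lemma is_series_at_angle s r : -(PI / 2) < s < PI / 2 -> sin s ^ 2 / 4 = r ->
  is_series (fun n => C (2 * S n) (S n) * Hbar2 (S n) * r ^ S n) (s ^ 2 / (2 * cos s)).
Proof.
  intros Hs Hr.
  assert (Hcos : 0 < cos s) by (apply cos_gt_0; lra).
  assert (Hsin : sin s ^ 2 + cos s ^ 2 = 1) by (rewrite <- (sin2_cos2 s); unfold Rsqr; ring).
  assert (Hsin1 : -1 < sin s < 1) by nra.
  replace (cos s) with (sqrt (1 - sin s ^ 2)) by
    (rewrite <- sqrt_pow2 with (cos s) by lra; f_equal; lra).
  rewrite <- (asin_sin s) at 1 by lra.
  refine (is_series_ext_eq _ _ _ _ _ eq_refl (is_series_asin_sq _ Hsin1)).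
  intro n. unfold asin_sq_coef, cbin. rewrite <- Hr, Rpow_div_distr.
  field. apply pow_nonzero. lra.
Qed.

Theorem corollary1p2 :
  (forall x : R, 0 <= x < 2 ->
     infinite_sum (fun n => term x (S n)) (asin (x / 2) ^ 2 / sqrt (4 - x ^ 2)))
  /\ infinite_sum (fun n => C (2 * S n) (S n) * Hbar2 (S n) / 16 ^ (S n))
                  (PI ^ 2 / (36 * sqrt 3))
  /\ infinite_sum (fun n => C (2 * S n) (S n) * Hbar2 (S n) / 8 ^ (S n))
                  (PI ^ 2 / (16 * sqrt 2))
  /\ infinite_sum (fun n => C (2 * S n) (S n) * 3 ^ (S n) * Hbar2 (S n) / 16 ^ (S n))
                  (PI ^ 2 / 9).
Proof.
  pose proof PI_RGT_0.
  assert (Hsqrt2 : sqrt 2 ^ 2 = 2) by (apply pow2_sqrt; lra).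
  assert (0 < sqrt 2) by (apply sqrt_lt_R0; lra).
  assert (0 < sqrt 3) by (apply sqrt_lt_R0; lra).
  repeat split; [intros x Hx|..]; apply is_series_Reals.
  - apply is_series_term. lra.
  - refine (is_series_ext_eq _ _ _ _ _ _ (is_series_at_angle (PI / 6) (/ 16) _ _)).
    + intro n. rewrite pow_inv. field. apply pow_nonzero. lra.
    + rewrite cos_PI6. field. lra.
    + lra.
    + rewrite sin_PI6. field.
  - refine (is_series_ext_eq _ _ _ _ _ _ (is_series_at_angle (PI / 4) (/ 8) _ _)).
    + intro n. rewrite pow_inv. field. apply pow_nonzero. lra.
    + rewrite cos_PI4. apply (Rmult_eq_reg_r (sqrt 2)); [|lra].
      field_simplify; [|lra..]. rewrite Hsqrt2. field.
    + lra.
    + rewrite sin_PI4, Rpow_div_distr, Hsqrt2. field.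
  - refine (is_series_ext_eq _ _ _ _ _ _ (is_series_at_angle (PI / 3) (3 / 16) _ _)).
    + intro n. rewrite Rpow_div_distr. field. apply pow_nonzero. lra.
    + rewrite cos_PI3. field.
    + lra.
    + rewrite sin_PI3, Rpow_div_distr, pow2_sqrt by lra. field.
Qed.
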